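(* Let $n\ge2$, $q\in\mathbb C$ a primitive $n$-th root of unity, and $u_q(sl_2)$ the $\mathbb C$-algebra with generators $K,E,F$ and relations $K^n=1$, $E^n=F^n=0$, $EK=qKE$, $FK=q^{-1}KF$, $EF-FE=\frac{K-K^{-1}}{q-q^{-1}}$, with basis $\{K^iF^jE^k:0\le i,j,k\le n-1\}$. Let $\int$ be the linear functional with $\int KF^{n-1}E^{n-1}=1$ and zero on all other basis monomials, giving the standard Frobenius form $(a,b)=\int ab$. For an invertible $u\in u_q(sl_2)$ consider the twisted Frobenius form $(a,b)_u:=\int uab$, with inverse $g_u=\sum g_u^1\otimes g_u^2$ and $\ell_u:=\sum g_u^1g_u^2$. Then $\ell_u$ depends only on the component of $u^{-1}$ in $u_q(sl_2)_0$: if $u,v$ are invertible and $u^{-1}$ and $v^{-1}$ have the same component in $u_q(sl_2)_0$, then $\ell_u=\ell_v$.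
   Context: For a Frobenius form $(\ ,\ )$ (bilinear, $(ab,c)=(a,bc)$, nondegenerate), its inverse is $g=\sum g^1\otimes g^2$ with $\sum(a,g^1)g^2=a=\sum g^1(g^2,a)$ for all $a$. The $\mathbb Z/n\mathbb Z$-grading of $u_q(sl_2)$ gives the basis monomial $K^iF^jE^k$ degree $j-k$ mod $n$; $u_q(sl_2)_0$ is the degree-$0$ part, i.e. the span of the monomials $K^iF^jE^j$, and the component of an element in $u_q(sl_2)_0$ is its projection onto this span along the other graded parts. *)

From mathcomp Require Import all_boot all_algebra.
From mathcomp Require Import reals Rstruct.
From mathcomp.real_closed Require Export complex.
Set Implicit Arguments. Unset Strict Implicit. Unset Printing Implicit Defensive.
Import GRing.Theory.
Local Open Scope ring_scope.

Notation CC := (Rdefinitions.R[i]).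

Section Uq.
Variables (n : nat) (A : unitAlgType CC) (K E F : A).

Definition mono (i j k : nat) : A := K ^+ i * F ^+ j * E ^+ k.

Definition monot (t : 'I_n * 'I_n * 'I_n) : A := mono t.1.1 t.1.2 t.2.

Definition uq_relations (q : CC) : Prop :=
  [/\ K ^+ n = 1, E ^+ n = 0, F ^+ n = 0,
      E * K = q *: (K * E) &
      F * K = q^-1 *: (K * F) /\
      E * F - F * E = (q - q^-1)^-1 *: (K - K^-1)].

Definition uq_basis : Prop :=
  forall a : A, exists! c : {ffun 'I_n * 'I_n * 'I_n -> CC},
    a = \sum_(t : 'I_n * 'I_n * 'I_n) c t *: monot t.

Definition standard_integral (intg : A -> CC) : Prop :=
  (forall (c : CC) (x y : A), intg (c *: x + y) = c * intg x + intg y) /\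
  (forall i j k : nat, (i < n)%N -> (j < n)%N -> (k < n)%N ->
     intg (mono i j k) = ((i == 1%N) && (j == n.-1) && (k == n.-1))%:R).

Definition tform (intg : A -> CC) (u : A) (a b : A) : CC := intg (u * a * b).

(* g = sum_{p in g} p.1 (x) p.2 is the inverse of the bilinear form *)
Definition is_inverse_form (form : A -> A -> CC) (g : seq (A * A)) : Prop :=
  forall a : A,
    \sum_(p <- g) form a p.1 *: p.2 = a /\ \sum_(p <- g) form p.2 a *: p.1 = a.

Definition ell (g : seq (A * A)) : A := \sum_(p <- g) p.1 * p.2.

Definition deg0_part (c : {ffun 'I_n * 'I_n * 'I_n -> CC}) : A :=
  \sum_(t : 'I_n * 'I_n * 'I_n | t.1.2 == t.2) c t *: monot t.

Definition same_deg0_component (a b : A) : Prop :=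
  exists ca cb : {ffun 'I_n * 'I_n * 'I_n -> CC},
    [/\ a = \sum_(t : 'I_n * 'I_n * 'I_n) ca t *: monot t,
        b = \sum_(t : 'I_n * 'I_n * 'I_n) cb t *: monot t
      & deg0_part ca = deg0_part cb].

End Uq.

From mathcomp Require Import all_boot all_algebra.
From mathcomp Require Import reals Rstruct.
Import GRing.Theory.
Local Open Scope ring_scope.
Set Implicit Arguments. Unset Strict Implicit. Unset Printing Implicit Defensive.

(* Untwisting [g_u] into [S_u := {(g^1, u g^2)}] turns it into a pair of dual
   bases of the standard form, and [l_u = sum g^1 u^-1 (u g^2)] is the Higman
   map [tau y := sum S^1 y S^2] of [S_u] evaluated at [u^-1].  The Higman map
   of a pair of dual bases does not depend on the choice of the bases, and since
   the integral is invariant under conjugation by [K], it satisfies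
   [tau (K y) = tau (y K)].  A monomial [K^i F^j E^k] with [j <> k] is [K y]
   with [y K = q^(k-j) K y] and [q^(k-j) <> 1], so [tau] kills it: [tau u^-1]
   only sees the degree-0 component of [u^-1]. *)

Lemma qcomm_expr (R : comNzRingType) (A : algType R) (c : R) (X Y : A) :
  X * Y = c *: (Y * X) -> forall k, X ^+ k * Y = c ^+ k *: (Y * X ^+ k).
Proof.
move=> hXY; elim=> [|k IHk]; first by rewrite !expr0 mul1r mulr1 scale1r.
rewrite exprSr -mulrA hXY -scalerAr (mulrA (X ^+ k)) IHk -scalerAl scalerA -mulrA.
by rewrite -exprSr -exprS.
Qed.

Section LinearFunctional.
Variables (R : nzRingType) (A : lmodType R) (lam : A -> R).
Hypothesis lam_lin : forall c x y, lam (c *: x + y) = c * lam x + lam y.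

Lemma lin_fun0 : lam 0 = 0.
Proof.
have := lam_lin 1 0 0; rewrite scale1r addr0 mul1r => h.
by apply: (addrI (lam 0)); rewrite addr0 -h.
Qed.

Lemma lin_funZ c x : lam (c *: x) = c * lam x.
Proof. by rewrite -[c *: x]addr0 lam_lin lin_fun0 addr0. Qed.

Lemma lin_fun_sum (I : finType) (P : pred I) (c : I -> R) (m : I -> A) :
  lam (\sum_(t | P t) c t *: m t) = \sum_(t | P t) c t * lam (m t).
Proof.
apply: (big_ind2 (fun a b => lam a = b)); first exact: lin_fun0.
  by move=> a b a' b' <- <-; rewrite -[a in LHS]scale1r lam_lin mul1r.
by move=> t _; exact: lin_funZ.
Qed.

End LinearFunctional.

Section HigmanMap.
Variables (R : fieldType) (A : algType R) (lam : A -> R).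

Definition higman (S : seq (A * A)) (y : A) : A := \sum_(p <- S) p.1 * y * p.2.

Definition left_dual (S : seq (A * A)) : Prop :=
  forall a, \sum_(p <- S) lam (a * p.1) *: p.2 = a.

Definition right_dual (S : seq (A * A)) : Prop :=
  forall a, \sum_(p <- S) lam (p.2 * a) *: p.1 = a.

Lemma higmanZ S c y : higman S (c *: y) = c *: higman S y.
Proof.
by rewrite /higman scaler_sumr; apply: eq_bigr => p _; rewrite -scalerAr -scalerAl.
Qed.

Lemma higman_sum S (I : finType) (P : pred I) (c : I -> R) (m : I -> A) :
  higman S (\sum_(t | P t) c t *: m t) = \sum_(t | P t) c t *: higman S (m t).
Proof.
rewrite /higman (eq_bigr (fun p => \sum_(t | P t) c t *: (p.1 * m t * p.2))).
  by rewrite exchange_big; apply: eq_bigr => t _; rewrite scaler_sumr.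
move=> p _; rewrite mulr_sumr mulr_suml.
by apply: eq_bigr => t _; rewrite -scalerAr -scalerAl.
Qed.

(* [x'] is the image of [x] under the Nakayama automorphism of [lam].  Proof:
   expand [S^1 x] along [S'], then resum over [S]. *)
Lemma higman_nakayama S S' x x' y :
  left_dual S -> right_dual S' -> (forall z, lam (z * x) = lam (x' * z)) ->
  higman S (x * y) = higman S' (y * x').
Proof.
move=> dS dS' hx; rewrite /higman.
transitivity (\sum_(p <- S) \sum_(p' <- S') lam (p'.2 * (p.1 * x)) *: (p'.1 * y * p.2)).
  apply: eq_bigr => p _; rewrite mulrA -{1}(dS' (p.1 * x)) !mulr_suml.
  by apply: eq_bigr => p' _; rewrite -!scalerAl.
rewrite exchange_big /=; apply: eq_bigr => p' _.
rewrite (mulrA p'.1) -(mulrA _ x') -(dS (x' * p'.2)) mulr_sumr.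
by apply: eq_bigr => p _; rewrite -scalerAr mulrA hx mulrA.
Qed.

Lemma higman_dual_eq S S' : left_dual S -> right_dual S' -> higman S =1 higman S'.
Proof.
move=> dS dS' y; rewrite -[y in LHS]mul1r -[y in RHS]mulr1.
by apply: higman_nakayama => // z; rewrite mulr1 mul1r.
Qed.

Lemma higman_skew_vanish S x y c :
  left_dual S -> right_dual S -> (forall z, lam (z * x) = lam (x * z)) ->
  y * x = c *: (x * y) -> c != 1 -> higman S (x * y) = 0.
Proof.
move=> dSl dSr hx hyx hc1.
have : higman S (x * y) = c *: higman S (x * y).
  by rewrite -higmanZ -hyx; exact: higman_nakayama.
move/eqP; rewrite -subr_eq0 -{1}(scale1r (higman _ _)) -scalerBl scaler_eq0.
by rewrite subr_eq0 eq_sym (negbTE hc1) => /eqP.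
Qed.

End HigmanMap.

Section Untwisting.
Variables (A : unitAlgType CC) (intg : A -> CC) (u : A) (g : seq (A * A)).
Hypotheses (hu : u \is a GRing.unit) (hg : is_inverse_form (tform intg u) g).

Definition untwist : seq (A * A) := [seq (p.1, u * p.2) | p <- g].

Lemma untwist_left_dual : left_dual intg untwist.
Proof.
move=> a; rewrite big_map -{2}(mulVKr hu a) -(proj1 (hg (u^-1 * a))) mulr_sumr.
by apply: eq_bigr => p _; rewrite /tform -scalerAr (mulrA u) mulrV ?mul1r.
Qed.

Lemma untwist_right_dual : right_dual intg untwist.
Proof. by move=> a; rewrite big_map -{2}(proj2 (hg a)). Qed.

Lemma ell_untwist : ell g = higman untwist u^-1.
Proof.
by rewrite /higman /ell big_map; apply: eq_bigr => p _; rewrite -mulrA mulKr.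
Qed.

End Untwisting.

Section SmallQuantumGroup.
Variables (n : nat) (q : CC) (A : unitAlgType CC) (K E F : A) (intg : A -> CC).
Hypotheses (hn : (2 <= n)%N) (hq : n.-primitive_root q).
Hypotheses (hrel : uq_relations n K E F q) (hbasis : uq_basis n K E F).
Hypothesis (hint : standard_integral n K E F intg).

Local Notation mono := (mono K E F).

Lemma q_neq0 : q != 0.
Proof.
apply/eqP => q0; have := prim_expr_order hq.
by rewrite q0 expr0n eqn0Ngt (ltnW hn) /= => /esym/eqP; rewrite oner_eq0.
Qed.

Lemma skew_factor_eq1 j k : (j < n)%N -> (k < n)%N ->
  (q ^+ k * q^-1 ^+ j == 1) = (j == k).
Proof.
move=> hj hk; have qj_neq0 : q ^+ j != 0 by rewrite expf_neq0 // q_neq0.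
rewrite exprVn -div1r mulrA mulr1 (can2_eq (divfK qj_neq0) (mulfK qj_neq0)) mul1r.
by rewrite (eq_prim_root_expr hq) !modn_small // eq_sym.
Qed.

Lemma mono_mulK i j k :
  mono i j k * K = (q ^+ k * q^-1 ^+ j) *: (K * mono i j k).
Proof.
have [_ _ _ hEK [hFK _]] := hrel.
rewrite /mono -mulrA (qcomm_expr hEK) -scalerAr mulrA -[_ * F ^+ j * K]mulrA.
rewrite (qcomm_expr hFK) -scalerAr -scalerAl scalerA mulrC !mulrA -exprS.
by rewrite -exprSr.
Qed.

Lemma K_mul_mono i j k : K * mono i j k = mono (i.+1 %% n) j k.
Proof.
have [hKn _ _ _ _] := hrel.
rewrite /mono !mulrA -exprS {1}(divn_eq i.+1 n) exprD mulnC exprM hKn.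
by rewrite expr1n mul1r.
Qed.

Lemma mono_pred i j k : (i < n)%N -> mono i j k = K * mono (i + n.-1) j k.
Proof.
move=> hi; rewrite K_mul_mono -addnS prednK ?(leq_trans _ hn) //.
by rewrite modnDr modn_small.
Qed.

(* [intg] is supported on degree 0, where [K] commutes with the monomials. *)
Lemma integral_mulK z : intg (z * K) = intg (K * z).
Proof.
have [hlin hmono] := hint.
have [c [-> _]] := hbasis z.
rewrite mulr_suml mulr_sumr (eq_bigr (fun t => c t *: (monot K E F t * K))); last first.
  by move=> t _; rewrite -scalerAl.
rewrite [in RHS](eq_bigr (fun t => c t *: (K * monot K E F t))); last first.
  by move=> t _; rewrite -scalerAr.
rewrite !lin_fun_sum //; apply: eq_bigr => [[[i j] k]] _ /=; congr (_ * _).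
rewrite /monot /= mono_mulK lin_funZ //.
have [-> | hjk] := eqVneq (j : nat) k.
  by rewrite (eqP (_ : q ^+ k * q^-1 ^+ k == 1)) ?mul1r // skew_factor_eq1.
rewrite K_mul_mono hmono ?ltn_mod ?(ltnW hn) // -andbA.
rewrite (_ : ((j : nat) == n.-1) && ((k : nat) == n.-1) = false) ?andbF ?mulr0 //.
by apply: contraNF hjk => /andP[/eqP -> /eqP ->].
Qed.

Lemma higman_mono_off_diag S i j k :
  left_dual intg S -> right_dual intg S ->
  (i < n)%N -> (j < n)%N -> (k < n)%N -> j != k -> higman S (mono i j k) = 0.
Proof.
move=> dSl dSr hi hj hk hjk; rewrite mono_pred //.
apply: higman_skew_vanish dSl dSr integral_mulK (mono_mulK _ _ _) _.
by rewrite skew_factor_eq1.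
Qed.

Lemma higman_deg0_part S (c : {ffun 'I_n * 'I_n * 'I_n -> CC}) :
  left_dual intg S -> right_dual intg S ->
  higman S (\sum_t c t *: monot K E F t) = higman S (deg0_part K E F c).
Proof.
move=> dSl dSr; rewrite /deg0_part !higman_sum.
rewrite (bigID (fun t : 'I_n * 'I_n * 'I_n => t.1.2 == t.2)) /=.
rewrite [X in _ + X]big1 ?addr0 // => t hjk.
by rewrite /monot higman_mono_off_diag ?scaler0.
Qed.

End SmallQuantumGroup.

Theorem mainTheorem7 (n : nat) (hn : (2 <= n)%N) (q : CC)
  (hq : n.-primitive_root q)
  (A : unitAlgType CC) (K E F : A)
  (hrel : uq_relations n K E F q) (hbasis : uq_basis n K E F)
  (intg : A -> CC) (hint : standard_integral n K E F intg)
  (u v : A) (hu : u \is a GRing.unit) (hv : v \is a GRing.unit)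
  (h0 : same_deg0_component n K E F u^-1 v^-1)
  (gu gv : seq (A * A))
  (hgu : is_inverse_form (tform intg u) gu)
  (hgv : is_inverse_form (tform intg v) gv) :
  ell gu = ell gv.
Proof.
have [cu [cv [Eu Ev hdeg0]]] := h0.
have dSv_l := untwist_left_dual hv hgv.
have dSv_r := untwist_right_dual hgv.
rewrite (ell_untwist gu hu) (ell_untwist gv hv).
rewrite (higman_dual_eq (untwist_left_dual hu hgu) dSv_r) Eu Ev.
have deg0 := higman_deg0_part hn hq hrel hbasis hint _ dSv_l dSv_r.
by rewrite (deg0 cu) (deg0 cv) hdeg0.
Qed.
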